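(* Let $t\ge 1$ and let $S=\{s_0,s_1,\ldots,s_t\}\subseteq BS^{+}(1,3)$ with $s_0=a^{x_0}$ and $s_i=b^{m_i}a^{x_i}$ for $1\le i\le t$, where $x_0,x_1,\dots,x_t\in\mathbb Z$ and $0<m_1<m_2<\cdots<m_t$ are integers; thus $k=|S|=t+1\ge 2$ and $S$ meets each coset $b^{m}a^{\mathbb Z}$ in at most one element. Suppose that $S$ is non-abelian and that the subgroup generated by $T=S\setminus\{s_0\}$ is abelian. Then $|S^2|\geq 4k-4$.
   Context: $BS(1,3)=\langle a,b\mid ab=ba^3\rangle$; $BS^{+}(1,3)=\{b^m a^x: m\in\mathbb{Z}_{\ge 0},\ x\in\mathbb{Z}\}$, with $(b^m a^x)(b^n a^y)=b^{m+n}a^{y+3^n x}$. $S^2=\{st: s,t\in S\}$. A set is non-abelian if the subgroup it generates is non-abelian. *)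

From mathcomp Require Import all_boot all_order all_algebra.
Set Implicit Arguments. Unset Strict Implicit. Unset Printing Implicit Defensive.
Import Order.TTheory GRing.Theory Num.Theory.
Local Open Scope ring_scope.

(* Elements of BS^+(1,3): b^m a^x is the pair (m, x), m : nat, x : int. *)
Definition bsp := (nat * int)%type.

(* (b^m a^x)(b^n a^y) = b^(m+n) a^(y + 3^n x) *)
Definition bsp_mul (u v : bsp) : bsp :=
  ((u.1 + v.1)%N, v.2 + (3 ^ v.1)%N%:Z * u.2).

Definition sq (S : seq bsp) : seq bsp :=
  undup [seq bsp_mul u v | u <- S, v <- S].

(* BS(1,3) realised faithfully as Z[1/3] ⋊ Z inside int * rat:
   b^m a^x  <->  (m, x), with (m,x)(n,y) = (m+n, y + 3^n x), n : int. *)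
Definition bs := (int * rat)%type.
Definition bs_mul (u v : bs) : bs := (u.1 + v.1, v.2 + (3%:Q ^ v.1) * u.2).
Definition bs_inv (u : bs) : bs := (- u.1, - ((3%:Q ^ (- u.1)) * u.2)).
Definition bs_one : bs := (0, 0).
Definition bs_of (u : bsp) : bs := (Posz u.1, (u.2)%:~R).

Inductive gen (A : bs -> Prop) : bs -> Prop :=
| gen_in g : A g -> gen A g
| gen_one : gen A bs_one
| gen_mul g h : gen A g -> gen A h -> gen A (bs_mul g h)
| gen_inv g : gen A g -> gen A (bs_inv g).

Definition gen_abelian (S : seq bsp) : Prop :=
  forall g h, gen (fun z => exists2 s, s \in S & z = bs_of s) g ->
              gen (fun z => exists2 s, s \in S & z = bs_of s) h ->
              bs_mul g h = bs_mul h g.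

From mathcomp Require Import all_boot all_order all_algebra.
From mathcomp Require Import zify ring.
Set Implicit Arguments. Unset Strict Implicit. Unset Printing Implicit Defensive.
Import GRing.Theory.
Local Open Scope ring_scope.

(* Write a = (0, x_0).  Inside the abelian group generated by T, the centraliser
   of s_i (i >= 1) meets the coset b^(m_i) a^Z only in s_i, because commuting
   with b^n a^y (n > 0) determines x in b^m a^x from m.  Hence any product of
   two elements of T lying over b^(m_i) is s_i itself.  Non-commutativity of S
   forces x_0 <> 0.  Then the 4t = 4k - 4 elements
     a^2,  s_i a,  a s_i  (1 <= i <= t),  s_1^2, s_1 s_2, s_2^2, ..., s_t^2
   of S^2 are distinct: the b-exponents separate them except inside one coset
   b^(m_i) a^Z, where s_i a, a s_i and s_i are pairwise distinct since
   x_0 <> 0 and m_i > 0. *)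

Definition bsp_comm (u v : bsp) : Prop := bsp_mul u v = bsp_mul v u.

Lemma pow3_sub1_neq0 (n : nat) : (0 < n)%N -> (3 ^ n)%N%:Z - 1 != 0.
Proof.
move=> n_gt0; rewrite subr_eq0 -[1]/(1%N%:Z) eqz_nat -(expn0 3) eqn_exp2l //.
by rewrite -lt0n.
Qed.

Lemma bsp_mulA : associative bsp_mul.
Proof.
move=> [m x] [n y] [p z]; rewrite /bsp_mul /= addnA expnD PoszM.
by congr pair; ring.
Qed.

Lemma bsp_commMl (u v w : bsp) :
  bsp_comm u w -> bsp_comm v w -> bsp_comm (bsp_mul u v) w.
Proof.
move=> uw vw; rewrite /bsp_comm -bsp_mulA vw bsp_mulA uw.
by rewrite -bsp_mulA.
Qed.

(* Commuting with [v] pins down [u.2 * (3^v.1 - 1)]. *)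
Lemma bsp_comm_fibre (u u' v : bsp) :
  (0 < v.1)%N -> u.1 = u'.1 -> bsp_comm u v -> bsp_comm u' v -> u = u'.
Proof.
move=> v_gt0 eq_1; have E (w : bsp) :
    bsp_comm w v -> w.2 * ((3 ^ v.1)%N%:Z - 1) = v.2 * ((3 ^ w.1)%N%:Z - 1).
  move=> /(congr1 snd) /= wv; apply/eqP; rewrite -subr_eq0.
  by rewrite -(subrr (v.2 + (3 ^ v.1)%N%:Z * w.2)) {2}wv; apply/eqP; ring.
move=> /E uv /E; rewrite -eq_1 -uv => /(mulIf (pow3_sub1_neq0 v_gt0)).
by case: u u' eq_1 {uv} => ? ? [? ?] /= -> ->.
Qed.

Lemma bsp_comm_a_eq0 (x : int) (v : bsp) :
  (0 < v.1)%N -> bsp_comm v (0%N, x) -> x = 0.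
Proof.
move=> v_gt0 /(congr1 snd) /=; rewrite expn0 mul1r addrC => /addrI /eqP.
rewrite -subr_eq0 -{1}[x]mul1r -mulrBl mulf_eq0 => /orP[|/eqP //].
by rewrite -opprB oppr_eq0 (negPf (pow3_sub1_neq0 v_gt0)).
Qed.

Lemma bsp_mul_a_neq (u : bsp) (x : int) : x != 0 -> bsp_mul u (0%N, x) != u.
Proof.
move=> x_neq0; apply: contra_neq x_neq0 => /(congr1 snd) /=.
by rewrite expn0 mul1r -{2}[u.2]add0r => /addIr.
Qed.

Lemma bsp_a_mul_neq (u : bsp) (x : int) : x != 0 -> bsp_mul (0%N, x) u != u.
Proof.
move=> x_neq0; apply: contra_neq x_neq0 => /(congr1 snd) /=.
rewrite -{2}[u.2]addr0 => /addrI /eqP; rewrite mulf_eq0 => /orP[|/eqP //].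
by rewrite eqz_nat expn_eq0.
Qed.

Lemma bs_of_mul (u v : bsp) : bs_of (bsp_mul u v) = bs_mul (bs_of u) (bs_of v).
Proof.
rewrite /bs_of /bs_mul /=; congr pair.
by rewrite rmorphD rmorphM /= -exprnP -[3%:~R]/(3%:R : rat) -natrX.
Qed.

Lemma bs_of_inj : injective bs_of.
Proof. by move=> [m x] [n y] [[->] /intr_inj ->]. Qed.

Lemma gen_abelian_comm (S : seq bsp) (u v : bsp) :
  gen_abelian S -> u \in S -> v \in S -> bsp_comm u v.
Proof.
move=> abS uS vS; apply: bs_of_inj; rewrite !bs_of_mul.
by apply: abS; apply: gen_in; [exists u | exists v].
Qed.

Lemma gen_sub (A B : bs -> Prop) (g : bs) :
  (forall z, A z -> gen B z) -> gen A g -> gen B g.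
Proof.
move=> AB; elim=> [z /AB //| | ? ? _ ? _ ? | ? _ ?].
- exact: gen_one.
- exact: gen_mul.
- exact: gen_inv.
Qed.

Lemma gen_abelian_cons1 (S : seq bsp) :
  gen_abelian S -> gen_abelian ((0%N, 0) :: S).
Proof.
have sub g : gen (fun z => exists2 s, s \in (0%N, 0) :: S & z = bs_of s) g ->
             gen (fun z => exists2 s, s \in S & z = bs_of s) g.
  apply: gen_sub => z [s]; rewrite inE => /predU1P[-> -> | sS ->].
    exact: gen_one.
  by apply: gen_in; exists s.
by move=> abS g h /sub gS /sub hS; apply: abS.
Qed.

(* Interleaved, these sums form the chain 2f(1) < f(1)+f(2) < 2f(2) < ... < 2f(t). *)
Lemma uniq_sumset_chain (f : nat -> nat) (t : nat) :
  {in iota 1 t &, {homo f : i j / (i < j)%N}} ->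
  uniq ([seq f i + f i | i <- iota 1 t] ++ [seq f i + f i.+1 | i <- iota 1 t.-1])%N.
Proof.
move=> f_lt; have f_le := leq_mono_in f_lt; have f_inj := incn_inj_in f_le.
have inS i : i \in iota 1 t.-1 -> (i \in iota 1 t) && (i.+1 \in iota 1 t).
  by rewrite !mem_iota; lia.
rewrite cat_uniq; apply/and3P; split.
- rewrite map_inj_in_uniq ?iota_uniq // => i j iD jD eq_ij.
  by apply: f_inj => //; lia.
- apply/hasPn => _ /mapP[j /inS/andP[jD j1D] ->]; apply/mapP => -[i iD eq_ij].
  have [lt_ij | le_ji] := ltnP i j.+1.
  + have := f_le i j iD jD; have := f_lt j j.+1 jD j1D; lia.
  + have := f_le j.+1 i j1D iD; have := f_lt j j.+1 jD j1D; lia.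
- rewrite map_inj_in_uniq ?iota_uniq // => i j /inS/andP[iD i1D] /inS/andP[jD j1D].
  have [lt_ij | lt_ji | //] := ltngtP i j.
  + have := f_lt i j iD jD; have := f_lt i.+1 j.+1 i1D j1D; lia.
  + have := f_lt j i jD iD; have := f_lt j.+1 i.+1 j1D i1D; lia.
Qed.

Section SquareLowerBound.
Variables (x0 : int) (v : nat -> bsp) (t : nat).
Hypothesis x0_neq0 : x0 != 0.
Hypothesis v_pos : {in iota 1 t, forall i, (0 < (v i).1)%N}.
Hypothesis v_incr : {in iota 1 t &, {homo (fun i => (v i).1) : i j / (i < j)%N}}.
Hypothesis v_comm : {in iota 1 t &, forall i j, bsp_comm (v i) (v j)}.

Let a : bsp := (0%N, x0).
Let I := iota 1 t.

Definition chain_prods : seq bsp :=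
  [seq bsp_mul (v i) (v i) | i <- I] ++ [seq bsp_mul (v i) (v i.+1) | i <- iota 1 t.-1].

Lemma uniq_chain_prods : uniq chain_prods.
Proof.
apply: (@map_uniq _ _ fst); rewrite map_cat -!map_comp.
exact: uniq_sumset_chain.
Qed.

Lemma chain_prodsP (z : bsp) :
  z \in chain_prods -> exists j l, [/\ j \in I, l \in I & z = bsp_mul (v j) (v l)].
Proof.
rewrite mem_cat => /orP[] /mapP[i iD ->]; first by exists i, i.
by exists i, i.+1; move: iD; rewrite !mem_iota; split => //; lia.
Qed.

Lemma mul_v_eq (i j l : nat) : i \in I -> j \in I -> l \in I ->
  (bsp_mul (v j) (v l)).1 = (v i).1 -> bsp_mul (v j) (v l) = v i.
Proof.
move=> iI jI lI eq_1; apply: (bsp_comm_fibre (v_pos iI) eq_1) => //.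
by apply: bsp_commMl; apply: v_comm.
Qed.

Lemma v_inj : {in I &, injective (fun i => (v i).1)}.
Proof. exact/incn_inj_in/leq_mono_in. Qed.

Lemma va_neq_av (i j : nat) : i \in I -> j \in I -> bsp_mul (v i) a != bsp_mul a (v j).
Proof.
move=> iI jI; apply/eqP => eq_ij.
have eq_1 : (v i).1 = (v j).1 by move/(congr1 fst): eq_ij => /=; lia.
move: eq_ij; rewrite (v_inj iI jI eq_1) => /(bsp_comm_a_eq0 (v_pos jI)).
exact/eqP.
Qed.

Lemma chain_prods_neq_va (i : nat) (z : bsp) :
  i \in I -> z \in chain_prods -> z != bsp_mul (v i) a.
Proof.
move=> iI /chain_prodsP[j [l [jI lI ->]]]; apply/eqP => eq_z.
have := bsp_mul_a_neq (v i) x0_neq0; rewrite -eq_z (mul_v_eq iI jI lI) ?eqxx //.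
by rewrite eq_z /= addn0.
Qed.

Lemma chain_prods_neq_av (i : nat) (z : bsp) :
  i \in I -> z \in chain_prods -> z != bsp_mul a (v i).
Proof.
move=> iI /chain_prodsP[j [l [jI lI ->]]]; apply/eqP => eq_z.
have := bsp_a_mul_neq (v i) x0_neq0; rewrite -eq_z (mul_v_eq iI jI lI) ?eqxx //.
by rewrite eq_z.
Qed.

Let products := bsp_mul a a :: [seq bsp_mul (v i) a | i <- I]
                ++ [seq bsp_mul a (v i) | i <- I] ++ chain_prods.

Lemma uniq_products : uniq products.
Proof.
have uniq_fst (f : nat -> bsp) :
    (forall i, (f i).1 = (v i).1) -> uniq [seq f i | i <- I].
  move=> f_1; rewrite map_inj_in_uniq ?iota_uniq // => i j iI jI /(congr1 fst).
  by rewrite !f_1 => /(v_inj iI jI).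
have pos_prods : all (fun z => 0 < z.1)%N
    ([seq bsp_mul (v i) a | i <- I] ++ [seq bsp_mul a (v i) | i <- I] ++ chain_prods).
  rewrite 2!all_cat; apply/and3P; split; apply/allP => z.
  - by case/mapP => i iI ->; rewrite /= addn0 v_pos.
  - by case/mapP => i iI ->; rewrite /= v_pos.
  - by case/chain_prodsP => j [l [jI lI ->]]; rewrite /= ltn_addr ?v_pos.
rewrite /products cons_uniq; apply/andP; split.
  by apply: contraL pos_prods => aL; apply/allPn; exists (bsp_mul a a).
rewrite cat_uniq uniq_fst => [|i]; last by rewrite /= addn0.
rewrite cat_uniq uniq_fst // uniq_chain_prods andbT /=.
apply/andP; split.
- apply/hasPn => z; rewrite mem_cat => /orP[/mapP[j jI ->] | zC];
    apply/mapP => -[i iI /eqP]; apply/negP.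
  + by rewrite eq_sym va_neq_av.
  + exact: chain_prods_neq_va.
- apply/hasPn => z zC; apply/mapP => -[i iI /eqP]; apply/negP.
  exact: chain_prods_neq_av.
Qed.

Lemma size_products : size products = (1 + 3 * t + t.-1)%N.
Proof. rewrite /= !size_cat !size_map !size_iota; lia. Qed.

Lemma products_sub : {subset products <= sq (a :: [seq v i | i <- I])}.
Proof.
have inS i : i \in I -> v i \in a :: [seq v i | i <- I].
  by move=> iI; rewrite inE map_f ?orbT.
have aS : a \in a :: [seq v i | i <- I] by rewrite inE eqxx.
have mulS u w : u \in a :: [seq v i | i <- I] -> w \in a :: [seq v i | i <- I] ->
    bsp_mul u w \in sq (a :: [seq v i | i <- I]).
  by move=> uS wS; rewrite mem_undup allpairs_f.
move=> z; rewrite inE => /predU1P[-> | ]; first exact: mulS.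
rewrite mem_cat => /orP[/mapP[i /inS iS ->] | ]; first exact: mulS.
rewrite mem_cat => /orP[/mapP[i /inS iS ->] | /chain_prodsP[j [l [/inS jS /inS lS ->]]]];
  exact: mulS.
Qed.

Lemma size_sq_chain : (4 * t <= size (sq (a :: [seq v i | i <- I])))%N.
Proof.
apply: leq_trans (uniq_leq_size uniq_products products_sub).
by rewrite size_products; lia.
Qed.

End SquareLowerBound.

Theorem lemma2p3 (t : nat) (x : nat -> int) (m : nat -> nat) :
  (1 <= t)%N ->
  (0 < m 1)%N ->
  (forall i, (1 <= i)%N -> (i < t)%N -> (m i < m i.+1)%N) ->
  let s := fun i => if i == 0%N then (0%N, x 0%N) else (m i, x i) in
  let S := [seq s i | i <- iota 0 t.+1] in
  let T := [seq s i | i <- iota 1 t] in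
  let k := size S in
  ~ gen_abelian S ->
  gen_abelian T ->
  (4 * k - 4 <= size (sq S))%N.
Proof.
move=> _ m1_gt0 m_incr s S T k nabS abT.
have x0_neq0 : x 0%N != 0.
  apply/eqP => x0_eq0; apply: nabS.
  have -> : S = (0%N, 0) :: T by rewrite /S /T /s /= x0_eq0.
  exact: gen_abelian_cons1.
have s_incr : {in iota 1 t &, {homo (fun i => (s i).1) : i j / (i < j)%N}}.
  apply: homo_ltn_in => [? ? ?|i j + + l|[//|i]]; first exact: ltn_trans.
    by rewrite !mem_iota; lia.
  by rewrite !mem_iota => iI i1I; apply: m_incr; lia.
have s_pos : {in iota 1 t, forall i, (0 < (s i).1)%N}.
  move=> [|[|i]]; rewrite mem_iota => iI //.
  by apply: leq_trans m1_gt0 (ltnW (s_incr 1%N i.+2 _ _ _)); rewrite ?mem_iota //; lia.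
have s_comm : {in iota 1 t &, forall i j, bsp_comm (s i) (s j)}.
  by move=> i j iI jI; apply: gen_abelian_comm abT _ _; apply: map_f.
rewrite /k size_map size_iota mulnS addKn.
exact: size_sq_chain x0_neq0 s_pos s_incr s_comm.
Qed.
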